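(* Consider periods $t=0,1,\dots,T$ with treatment statuses $D_0,D_1,\dots,D_T\in\{0,1\}$, $D_0=0$, observed outcomes $Y_t$ and potential outcomes $Y_t(0,d_1,\dots,d_T)$ for each path $(0,d_1,\dots,d_T)\in\{0\}\times\{0,1\}^T$, such that $$Y_t=\sum_{(d_1,\dots,d_T)\in\{0,1\}^T}Y_t(0,d_1,\dots,d_T)\,\mathbf 1\{D_0=0,D_1=d_1,\dots,D_T=d_T\},$$ and let $\mathcal I_0$ be a set of pre-treatment periods $\iota_0$, in each of which the outcome equals the untreated potential outcome $Y_{\iota_0}(0)$ for all units. Fix two paths $\mathbf d=(0,d_1,\dots,d_T)$ and $\mathbf d'=(0,d'_1,\dots,d'_T)$ and write $\mathbf D=(D_0,\dots,D_T)$. For $t\ge1$ define $$ATT_t=\mathbb E[Y_t(\mathbf d)-Y_t(\mathbf d')\mid \mathbf D=\mathbf d],\qquad \theta^t_{DIM}=\mathbb E[Y_t\mid \mathbf D=\mathbf d]-\mathbb E[Y_t\mid \mathbf D=\mathbf d'],$$ $$SB_t=\mathbb E[Y_t(\mathbf d')\mid \mathbf D=\mathbf d]-\mathbb E[Y_t(\mathbf d')\mid \mathbf D=\mathbf d'],$$ and for $\iota_0\in\mathcal I_0$, $$SB_{\iota_0}=\mathbb E[Y_{\iota_0}(0)\mid \mathbf D=\mathbf d]-\mathbb E[Y_{\iota_0}(0)\mid \mathbf D=\mathbf d'].$$ Assume (extended bias set stability) that for each $t$, $SB_t\in\big[\inf_{\iota_0\in\mathcal I_0}SB_{\iota_0},\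 \sup_{\iota_0\in\mathcal I_0}SB_{\iota_0}\big]$. Then $$ATT_t\in\Big[\theta^t_{DIM}-\sup_{\iota_0\in\mathcal I_0}SB_{\iota_0},\ \theta^t_{DIM}-\inf_{\iota_0\in\mathcal I_0}SB_{\iota_0}\Big]\equiv\Theta_I^t,$$ and these bounds are sharp: $\Theta_I^t$ is the identified set for $ATT_t$, i.e. every value in $\Theta_I^t$ is attained by some joint distribution of latent and observed variables consistent with the observed data distribution and the assumptions.
   Context: All conditional expectations are assumed to exist, and the conditioning events $\{\mathbf D=\mathbf d\}$, $\{\mathbf D=\mathbf d'\}$ have positive probability. $ATT_t$ is the average effect in period $t$, for units following path $\mathbf d$, of following $\mathbf d$ rather than $\mathbf d'$. *)

From HB Require Import structures.
From mathcomp Require Import all_boot all_order all_algebra.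
From mathcomp Require Import all_classical all_reals all_analysis.
Set Implicit Arguments. Unset Strict Implicit. Unset Printing Implicit Defensive.
Import Order.TTheory GRing.Theory Num.Theory.
Local Open Scope classical_set_scope.
Local Open Scope ring_scope.

Section DiD.
Context {R : realType} {T : nat} {I0 : finType}
        {dsp : measure_display} {Omega : measurableType dsp}.

(* A treatment path (0,d_1,...,d_T): D_0 = 0 is fixed, so a path is
   determined by (d_1,...,d_T) : {ffun 'I_T -> bool}.  Period k : 'I_T
   stands for period k+1. *)
Definition path := {ffun 'I_T -> bool}.

Definition Dvec (D : 'I_T -> Omega -> bool) (w : Omega) : path :=
  [ffun k => D k w].

Definition evt (D : 'I_T -> Omega -> bool) (d : path) : set Omega :=
  [set w | Dvec D w = d].

Definition cexp (P : probability Omega R) (A : set Omega) (X : Omega -> R) : R :=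
  Rintegral P A X / fine (P A).

Definition SBpre (P : probability Omega R) (D : 'I_T -> Omega -> bool)
  (Ypre0 : I0 -> Omega -> R) (d d' : path) (i : I0) : R :=
  cexp P (evt D d) (Ypre0 i) - cexp P (evt D d') (Ypre0 i).

Definition SBt (P : probability Omega R) (D : 'I_T -> Omega -> bool)
  (Ypo : 'I_T.+1 -> path -> Omega -> R) (d d' : path) (t : 'I_T.+1) : R :=
  cexp P (evt D d) (Ypo t d') - cexp P (evt D d') (Ypo t d').

Definition ATT (P : probability Omega R) (D : 'I_T -> Omega -> bool)
  (Ypo : 'I_T.+1 -> path -> Omega -> R) (d d' : path) (t : 'I_T.+1) : R :=
  cexp P (evt D d) (fun w => Ypo t d w - Ypo t d' w).

Definition thetaDIM (P : probability Omega R) (D : 'I_T -> Omega -> bool)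
  (Y : 'I_T.+1 -> Omega -> R) (d d' : path) (t : 'I_T.+1) : R :=
  cexp P (evt D d) (Y t) - cexp P (evt D d') (Y t).

Definition SBsup (P : probability Omega R) (D : 'I_T -> Omega -> bool)
  (Ypre0 : I0 -> Omega -> R) (d d' : path) (i0 : I0) : R :=
  \big[Num.max/SBpre P D Ypre0 d d' i0]_(i : I0) SBpre P D Ypre0 d d' i.
Definition SBinf (P : probability Omega R) (D : 'I_T -> Omega -> bool)
  (Ypre0 : I0 -> Omega -> R) (d d' : path) (i0 : I0) : R :=
  \big[Num.min/SBpre P D Ypre0 d d' i0]_(i : I0) SBpre P D Ypre0 d d' i.

Definition model_assumptions (P : probability Omega R)
  (D : 'I_T -> Omega -> bool) (Y : 'I_T.+1 -> Omega -> R)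
  (Ypo : 'I_T.+1 -> path -> Omega -> R)
  (Ypre Ypre0 : I0 -> Omega -> R) (d d' : path) : Prop :=
  [/\ ((forall k, measurable (D k @^-1` [set true])) /\
       (forall t, measurable_fun setT (Y t)) /\
       (forall t p, measurable_fun setT (Ypo t p)) /\
       (forall i, measurable_fun setT (Ypre i) /\ measurable_fun setT (Ypre0 i))),
      (forall t w, Y t w = \sum_(p : path) Ypo t p w * (Dvec D w == p)%:R),
      (forall i w, Ypre i w = Ypre0 i w),
      (0 < P (evt D d))%E /\ (0 < P (evt D d'))%E &
      (forall A, A = evt D d \/ A = evt D d' ->
         (forall t, P.-integrable A (EFin \o Y t)) /\
         (forall t p, p = d \/ p = d' -> P.-integrable A (EFin \o Ypo t p)) /\
         (forall i, P.-integrable A (EFin \o Ypre0 i)))].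

Definition ext_BSS (P : probability Omega R) (D : 'I_T -> Omega -> bool)
  (Ypo : 'I_T.+1 -> path -> Omega -> R) (Ypre0 : I0 -> Omega -> R)
  (d d' : path) (i0 : I0) : Prop :=
  forall t : 'I_T.+1, (0 < t)%N ->
    SBinf P D Ypre0 d d' i0 <= SBt P D Ypo d d' t <= SBsup P D Ypre0 d d' i0.

End DiD.

(* Two models have the same distribution of observed data
   (D_1..D_T, Y_0..Y_T, (Y_i)_{i in I_0}): they agree on all measurable
   rectangles, which form a pi-system generating the product sigma-algebra,
   i.e. the joint laws coincide. *)
Definition same_observed_law {R : realType} {T : nat} {I0 : finType}
  {dsp1 : measure_display} {O1 : measurableType dsp1}
  {dsp2 : measure_display} {O2 : measurableType dsp2}
  (P1 : probability O1 R) (D1 : 'I_T -> O1 -> bool) (Y1 : 'I_T.+1 -> O1 -> R)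
  (Ypre1 : I0 -> O1 -> R)
  (P2 : probability O2 R) (D2 : 'I_T -> O2 -> bool) (Y2 : 'I_T.+1 -> O2 -> R)
  (Ypre2 : I0 -> O2 -> R) : Prop :=
  forall (p : {ffun 'I_T -> bool}) (B : 'I_T.+1 -> set R) (C : I0 -> set R),
    (forall t, measurable (B t)) -> (forall i, measurable (C i)) ->
    P1 [set w | Dvec D1 w = p /\ (forall t, B t (Y1 t w)) /\
                (forall i, C i (Ypre1 i w))]
    = P2 [set w | Dvec D2 w = p /\ (forall t, B t (Y2 t w)) /\
                  (forall i, C i (Ypre2 i w))].

From HB Require Import structures.
From mathcomp Require Import all_boot all_order all_algebra.
From mathcomp Require Import all_classical all_reals all_analysis.
From mathcomp Require Import ring lra measurable_realfun.
Set Implicit Arguments.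
Unset Strict Implicit.
Unset Printing Implicit Defensive.
Import Order.TTheory GRing.Theory Num.Theory.
Local Open Scope classical_set_scope.
Local Open Scope ring_scope.

(* On {D = d} the observed outcome is Y_t(d), so E[Y_t | D = d] equals
   E[Y_t(d) | D = d] and ATT_t = theta_DIM^t - SB_t; extended bias set
   stability then yields the bounds.  For sharpness, adding a constant c to
   Y_t(d') on {D = d} leaves the observed data unchanged (for d <> d'),
   shifts SB_t by c and ATT_t by -c; taking c = ATT_t - theta makes ATT_t
   equal to theta while SB_t = theta_DIM^t - theta still lies between the
   pre-treatment biases.  For d = d' the identified set is {0}. *)

Section ConditionalExpectation.
Context {R : realType} {dsp : measure_display} {Omega : measurableType dsp}.
Variables (P : probability Omega R) (A : set Omega).

Lemma eq_cexp (f g : Omega -> R) : (forall w, A w -> f w = g w) ->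
  cexp P A f = cexp P A g.
Proof.
move=> fg; rewrite /cexp; congr (_ / _).
by apply: eq_Rintegral => w /set_mem/fg.
Qed.

Hypothesis mA : measurable A.

Lemma cexpB (f g : Omega -> R) :
  P.-integrable A (EFin \o f) -> P.-integrable A (EFin \o g) ->
  cexp P A (fun w => f w - g w) = cexp P A f - cexp P A g.
Proof. by move=> intf intg; rewrite /cexp RintegralB // mulrBl. Qed.

Lemma cexpDr (f : Omega -> R) (k : R) : (0 < P A)%E ->
  P.-integrable A (EFin \o f) -> cexp P A (fun w => f w + k) = cexp P A f + k.
Proof.
move=> PA intf; have PAfin : 0 < fine (P A).
  by apply: fine_gt0; rewrite PA (le_lt_trans (probability_le1 P mA)) ?ltry.
rewrite /cexp RintegralD //; last exact: finite_measure_integrable_cst.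
by rewrite Rintegral_cst // mulrDl mulfK // gt_eqF.
Qed.

End ConditionalExpectation.

Section Model.
Context {R : realType} {T : nat} {I0 : finType}
        {dsp : measure_display} {Omega : measurableType dsp}.
Implicit Types (P : probability Omega R) (D : 'I_T -> Omega -> bool)
  (p : {ffun 'I_T -> bool}).

Lemma measurable_evt D p : (forall k, measurable (D k @^-1` [set true])) ->
  measurable (evt D p).
Proof.
move=> mD; have -> : evt D p = \bigcap_(k in [set: 'I_T]) [set w | D k w = p k].
  apply/seteqP; split => w /=; first by move=> <- k _; rewrite ffunE.
  by move=> Dp; apply/ffunP => k; rewrite ffunE; apply: Dp.
apply: fin_bigcap_measurable; first exact: finite_finset.
move=> k _; case: (p k); first exact: mD.
rewrite (_ : [set w | D k w = false] = ~` (D k @^-1` [set true])).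
  exact: measurableC.
by apply/seteqP; split => w /=; case: (D k w).
Qed.

Lemma observed_outcome_evt D (Y : 'I_T.+1 -> Omega -> R) Ypo p t w :
  (forall t w,
     Y t w = \sum_(q : {ffun 'I_T -> bool}) Ypo t q w * (Dvec D w == q)%:R) ->
  evt D p w -> Y t w = Ypo t p w.
Proof.
move=> HY Dp; rewrite HY (bigD1 p) //= Dp eqxx mulr1 big1 ?addr0 // => q qp.
by rewrite eq_sym (negbTE qp) mulr0.
Qed.

Lemma SBsup_diag P D (Ypre0 : I0 -> Omega -> R) p (i0 : I0) :
  SBsup P D Ypre0 p p i0 = 0.
Proof.
rewrite /SBsup /SBpre subrr; apply: big1_idem => [|i _]; first exact: maxxx.
exact: subrr.
Qed.

Lemma SBinf_diag P D (Ypre0 : I0 -> Omega -> R) p (i0 : I0) :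
  SBinf P D Ypre0 p p i0 = 0.
Proof.
rewrite /SBinf /SBpre subrr; apply: big1_idem => [|i _]; first exact: minxx.
exact: subrr.
Qed.

Definition shift_po (Ypo : 'I_T.+1 -> {ffun 'I_T -> bool} -> Omega -> R)
    (t : 'I_T.+1) p (A : set Omega) (c : R) :
    'I_T.+1 -> {ffun 'I_T -> bool} -> Omega -> R :=
  fun t' q => if (t' == t) && (q == p) then (fun w => Ypo t' q w + c * \1_A w)
              else Ypo t' q.

Variables (P : probability Omega R) (D : 'I_T -> Omega -> bool)
  (Y : 'I_T.+1 -> Omega -> R)
  (Ypo : 'I_T.+1 -> {ffun 'I_T -> bool} -> Omega -> R)
  (Ypre Ypre0 : I0 -> Omega -> R) (d d' : {ffun 'I_T -> bool}).
Hypothesis model : model_assumptions P D Y Ypo Ypre Ypre0 d d'.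

Lemma ATT_thetaDIM_SBt t :
  ATT P D Ypo d d' t = thetaDIM P D Y d d' t - SBt P D Ypo d d' t.
Proof.
case: model => -[mD _] HY _ _ Hint.
have [_ [IA _]] := Hint _ (or_introl erefl).
rewrite /ATT /thetaDIM /SBt cexpB; last 3 first.
- exact: measurable_evt.
- by apply: IA; left.
- by apply: IA; right.
have Y_evt p w : evt D p w -> Y t w = Ypo t p w.
  exact: observed_outcome_evt HY.
by rewrite (eq_cexp P (Y_evt d)) (eq_cexp P (Y_evt d')); ring.
Qed.

Variable i0 : I0.

Lemma ATT_bounds (t : 'I_T.+1) :
  ext_BSS P D Ypo Ypre0 d d' i0 -> (0 < t)%N ->
  thetaDIM P D Y d d' t - SBsup P D Ypre0 d d' i0 <= ATT P D Ypo d d' t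
    <= thetaDIM P D Y d d' t - SBinf P D Ypre0 d d' i0.
Proof.
move=> BSS t_gt0; have /andP[SBt_ge SBt_le] := BSS t t_gt0.
by rewrite ATT_thetaDIM_SBt; apply/andP; split; lra.
Qed.

Section Shift.
Hypothesis dd' : d != d'.
Variables (t : 'I_T.+1) (c : R).

Let A := evt D d.
Let A' := evt D d'.

Let indic_evt w : A w -> \1_A w = 1 :> R.
Proof. by move=> Aw; rewrite indicE mem_set. Qed.

Let indic_evt' w : A' w -> \1_A w = 0 :> R.
Proof.
move=> A'w; rewrite indicE memNset // => Aw.
by move: dd'; rewrite -Aw -A'w eqxx.
Qed.

Lemma model_assumptions_shift :
  model_assumptions P D Y (shift_po Ypo t d' A c) Ypre Ypre0 d d'.
Proof.
case: model => -[mD [mY [mYpo mYpre]]] HY Hpre Ppos Hint.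
have mA : measurable A by exact: measurable_evt.
have integrable_shift B f : measurable B -> P.-integrable B (EFin \o f) ->
    P.-integrable B (EFin \o (fun w => f w + c * \1_A w)).
  move=> mB If; have Ic : P.-integrable B (EFin \o (fun w => c * \1_A w)).
    apply: (integrableZl mB c (f := EFin \o \1_A)).
    exact: integrableS (integrable_indic P mA).
  exact: (eq_integrable mB _ _ _ (integrableD mB If Ic)).
split => //.
- do 3!split => //; move=> t' q; rewrite /shift_po; case: ifP => _ //.
  by apply: measurable_funD => //; apply: measurable_funM.
- move=> t' w; rewrite HY; apply: eq_bigr => q _; rewrite /shift_po.
  case: ifP => // /andP[_ /eqP ->].
  have [Dd'|] := eqVneq (Dvec D w) d'; last by rewrite !mulr0.
  by rewrite indic_evt' // mulr0 addr0.
- move=> B HB; have mB : measurable B by case: HB => ->; exact: measurable_evt.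
  have [IY [Ipo Ipre]] := Hint B HB; do 2!split => //.
  move=> t' q Hq; rewrite /shift_po; case: ifP => _; last exact: Ipo.
  exact/integrable_shift/Ipo.
Qed.

Lemma SBt_shift :
  SBt P D (shift_po Ypo t d' A c) d d' t = SBt P D Ypo d d' t + c.
Proof.
case: model => -[mD _] _ _ [PA _] Hint.
have [_ [IA _]] := Hint _ (or_introl erefl).
rewrite /SBt /shift_po !eqxx /=.
have shift_on_A w : A w -> Ypo t d' w + c * \1_A w = Ypo t d' w + c.
  by move=> /indic_evt ->; rewrite mulr1.
have shift_on_A' w : A' w -> Ypo t d' w + c * \1_A w = Ypo t d' w.
  by move=> /indic_evt' ->; rewrite mulr0 addr0.
rewrite (eq_cexp P shift_on_A) (eq_cexp P shift_on_A') cexpDr //.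
- by ring.
- exact: measurable_evt.
- by apply: IA; right.
Qed.

Lemma ATT_shift :
  ATT P D (shift_po Ypo t d' A c) d d' t = ATT P D Ypo d d' t - c.
Proof.
case: model => -[mD _] _ _ [PA _] Hint.
have [_ [IA _]] := Hint _ (or_introl erefl).
have mA : measurable A by exact: measurable_evt.
rewrite /ATT /shift_po eqxx (negbTE dd') !eqxx /=.
have shift_on_A w : A w ->
    Ypo t d w - (Ypo t d' w + c * \1_A w) = Ypo t d w - Ypo t d' w + - c.
  by move=> /indic_evt ->; rewrite mulr1 opprD addrA.
rewrite (eq_cexp P shift_on_A) cexpDr //.
have Id : P.-integrable A (EFin \o Ypo t d) by apply: IA; left.
have Id' : P.-integrable A (EFin \o Ypo t d') by apply: IA; right.
apply: (eq_integrable mA _ _ _ (integrableB mA Id Id')) => w _.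
by rewrite /= EFinB.
Qed.

Lemma ext_BSS_shift :
  ext_BSS P D Ypo Ypre0 d d' i0 ->
  SBinf P D Ypre0 d d' i0 <= SBt P D Ypo d d' t + c
    <= SBsup P D Ypre0 d d' i0 ->
  ext_BSS P D (shift_po Ypo t d' A c) Ypre0 d d' i0.
Proof.
move=> BSS SBt_c t' t'_gt0.
have [->|t't] := eqVneq t' t; first by rewrite SBt_shift.
by rewrite /SBt /shift_po (negbTE t't); apply: BSS.
Qed.

End Shift.

End Model.

Theorem proposition6 (R : realType) (T : nat) (I0 : finType) (i0 : I0)
  (dsp : measure_display) (Omega : measurableType dsp) (P : probability Omega R)
  (D : 'I_T -> Omega -> bool) (Y : 'I_T.+1 -> Omega -> R)
  (Ypo : 'I_T.+1 -> {ffun 'I_T -> bool} -> Omega -> R)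
  (Ypre Ypre0 : I0 -> Omega -> R) (d d' : {ffun 'I_T -> bool}) :
  model_assumptions P D Y Ypo Ypre Ypre0 d d' ->
  ext_BSS P D Ypo Ypre0 d d' i0 ->
  forall t : 'I_T.+1, (0 < t)%N ->
    (* ATT_t lies in Theta_I^t *)
    (thetaDIM P D Y d d' t - SBsup P D Ypre0 d d' i0 <= ATT P D Ypo d d' t
       <= thetaDIM P D Y d d' t - SBinf P D Ypre0 d d' i0)
    /\
    (* sharpness: every value of Theta_I^t is attained by some model
       consistent with the observed data distribution and the assumptions *)
    (forall theta : R,
       thetaDIM P D Y d d' t - SBsup P D Ypre0 d d' i0 <= theta
         <= thetaDIM P D Y d d' t - SBinf P D Ypre0 d d' i0 ->
       exists (dsp' : measure_display) (Omega' : measurableType dsp')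
              (P' : probability Omega' R)
              (D' : 'I_T -> Omega' -> bool) (Y' : 'I_T.+1 -> Omega' -> R)
              (Ypo' : 'I_T.+1 -> {ffun 'I_T -> bool} -> Omega' -> R)
              (Ypre' Ypre0' : I0 -> Omega' -> R),
         [/\ same_observed_law P D Y Ypre P' D' Y' Ypre',
             model_assumptions P' D' Y' Ypo' Ypre' Ypre0' d d',
             ext_BSS P' D' Ypo' Ypre0' d d' i0 &
             ATT P' D' Ypo' d d' t = theta]).
Proof.
move=> model BSS t t_gt0; split; first exact (ATT_bounds model BSS t_gt0).
move=> theta /andP[theta_ge theta_le].
have [eq_dd'|dd'] := eqVneq d d'.
  subst d'; exists dsp, Omega, P, D, Y, Ypo, Ypre, Ypre0; split => //.
  move: theta_ge theta_le; rewrite SBsup_diag SBinf_diag.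
  by rewrite (ATT_thetaDIM_SBt model) /thetaDIM /SBt !subrr; lra.
pose c := ATT P D Ypo d d' t - theta.
exists dsp, Omega, P, D, Y, (shift_po Ypo t d' (evt D d) c), Ypre, Ypre0.
split => //.
- exact: model_assumptions_shift.
- apply: (ext_BSS_shift model dd' BSS).
  have -> : SBt P D Ypo d d' t + c = thetaDIM P D Y d d' t - theta.
    by rewrite /c (ATT_thetaDIM_SBt model); ring.
  by apply/andP; split; lra.
- by rewrite (ATT_shift model dd') /c; ring.
Qed.
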